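(* Let $f\in\mathbb{Z}_2[x]$, $n\ge2$, and let $\sigma$ be a weakly splitting cycle of $f_n$. Then one of the two lifts of $\sigma$ is again weakly splitting, and the other lift weakly grows and its (unique) lift strongly splits.
   Context: $f_n$ is the induced map on $\mathbb{Z}/2^n\mathbb{Z}$, $f_n(x\bmod 2^n)=f(x)\bmod 2^n$. A $k$-cycle of $f_n$ is a tuple $\sigma=(x_1,\dots,x_k)$ of distinct elements with $f_n(x_i)=x_{i+1}$, $f_n(x_k)=x_1$; its lifts are the cycles of $f_{n+1}$ in $\{y\in\mathbb{Z}/2^{n+1}\mathbb{Z}:y\bmod 2^n\in\sigma\}$. For a $k$-cycle at level $n$ and a representative $x\in\mathbb{Z}_2$ of one of its points, $a_n=(f^k)'(x)$, $b_n=(f^k(x)-x)/2^n$. A cycle strongly grows if $a_n\equiv1\pmod4$, $b_n$ odd; weakly grows if $a_n\equiv3\pmod4$, $b_n$ odd; strongly splits if $a_n\equiv1\pmod4$, $b_n$ even; weakly splits if $a_n\equiv3\pmod4$, $b_n$ even (independent of the representative). *)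

(* 2-adic integers modelled as coherent sequences of integer
   approximations (inverse limit of Z/2^m Z). *)
From mathcomp Require Import all_boot all_order all_algebra.
Set Implicit Arguments. Unset Strict Implicit. Unset Printing Implicit Defensive.
Import Order.TTheory GRing.Theory Num.Theory.
Local Open Scope ring_scope.

Definition pow2 (m : nat) : int := 2%:Z ^+ m.

(** A 2-adic integer: a sequence s of integers with s (m+1) = s m (mod 2^m);
    s m represents the class of the 2-adic integer modulo 2^m. *)
Record Z2 := MkZ2 { z2seq :> nat -> int;
                    z2coh : forall m : nat, (z2seq m.+1 = z2seq m %[mod pow2 m])%Z }.

(** A polynomial in Z_2[x], given by its list of coefficients (constant first). *)
Definition Z2poly := seq Z2.

Definition approx (f : Z2poly) (m : nat) : {poly int} :=
  Poly [seq z2seq c m | c <- f].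

Definition z2_cong (z : nat -> int) (r : int) (m : nat) : Prop :=
  (z m = r %[mod pow2 m])%Z.

Definition fn (f : Z2poly) (n : nat) (x : int) : int :=
  ((approx f n).[x] %% pow2 n)%Z.

Definition is_cycle (f : Z2poly) (n : nat) (s : seq int) : Prop :=
  [/\ (0 < size s)%N, uniq s, all (fun x => (0 <= x) && (x < pow2 n)) s &
      forall i, (i < size s)%N ->
        fn f n (nth 0 s i) = nth 0 s (i.+1 %% size s)%N].

Definition is_lift (f : Z2poly) (n : nat) (s tau : seq int) : Prop :=
  is_cycle f n.+1 tau /\ all (fun y => (y %% pow2 n)%Z \in s) tau.

Definition iter_approx (f : Z2poly) (k m : nat) : {poly int} :=
  iter k (fun p => approx f m \Po p) 'X.

Definition a_coef (f : Z2poly) (k : nat) (x : Z2) : nat -> int :=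
  fun m => ((iter_approx f k m)^`()).[x m].

(** b_n = (f^k(x) - x) / 2^n, as coherent approximations (level m uses
    level m+n of f^k(x) - x, which is divisible by 2^n). *)
Definition b_coef (f : Z2poly) (n k : nat) (x : Z2) : nat -> int :=
  fun m => (((iter_approx f k (m + n)).[x (m + n)] - x (m + n)) %/ pow2 n)%Z.

Definition cyc_prop (f : Z2poly) (n : nat) (s : seq int)
    (P : (nat -> int) -> (nat -> int) -> Prop) : Prop :=
  forall x : Z2, (x n %% pow2 n)%Z \in s ->
    P (a_coef f (size s) x) (b_coef f n (size s) x).

Definition strongly_grows f n s :=
  cyc_prop f n s (fun a b => z2_cong a 1 2 /\ z2_cong b 1 1).
Definition weakly_grows f n s :=
  cyc_prop f n s (fun a b => z2_cong a 3 2 /\ z2_cong b 1 1).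
Definition strongly_splits f n s :=
  cyc_prop f n s (fun a b => z2_cong a 1 2 /\ z2_cong b 0 1).
Definition weakly_splits f n s :=
  cyc_prop f n s (fun a b => z2_cong a 3 2 /\ z2_cong b 0 1).

From mathcomp Require Import all_boot all_order all_algebra.
From mathcomp Require Import zify ring.
Set Implicit Arguments. Unset Strict Implicit. Unset Printing Implicit Defensive.
Import Order.TTheory GRing.Theory Num.Theory.
Local Open Scope ring_scope.

(* Let k be the length of sigma and Q = f^k. At every w above sigma, weak
   splitting says Q'(w) = 3 (mod 4) and Q(w) = w (mod 2^(n+1)). Whether
   Q(w) = w holds even modulo 2^(n+2) is, by Taylor expansion, unchanged along
   f-orbits and under w -> w + 2^(n+1), but reversed under w -> w + 2^n, since
   then Q(w) - w moves by 2^n (Q'(w) - 1) with Q'(w) - 1 = 2 (mod 4). Hence of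
   the two residues modulo 2^(n+1) above a point of sigma, exactly one returns
   modulo 2^(n+2): its orbit is the weakly splitting lift, the other orbit is
   the weakly growing lift. On the latter, Q o Q returns modulo 2^(n+3) with
   (Q o Q)' = 1 (mod 4) while Q does not return modulo 2^(n+2), so it lifts to
   a single strongly splitting cycle of twice the length. *)

Lemma horner_taylor (p : {poly int}) (x h : int) :
  exists c, p.[x + h] = p.[x] + h * p^`().[x] + h ^+ 2 * c.
Proof.
elim/poly_ind: p => [|p a [c IH]].
  by exists 0; rewrite deriv0 !horner0; ring.
exists (p^`().[x] + c * (x + h)).
by rewrite derivMXaddC !hornerE IH /=; ring.
Qed.

Lemma dvdz_horner_sub (p : {poly int}) (d x y : int) :
  (d %| x - y)%Z -> (d %| p.[x] - p.[y])%Z.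
Proof.
move=> /dvdzP [u xyE]; have -> : x = y + u * d by rewrite -xyE; ring.
have [c ->] := horner_taylor p y (u * d).
by apply/dvdzP; exists (u * p^`().[y] + u ^+ 2 * d * c); ring.
Qed.

Definition eqpmod (d : int) (p q : {poly int}) :=
  exists r : {poly int}, p = q + d%:P * r.

Lemma eqpmod_refl d p : eqpmod d p p.
Proof. by exists 0; rewrite mulr0 addr0. Qed.

Lemma eqpmod_comp d p p' q q' :
  eqpmod d p p' -> eqpmod d q q' -> eqpmod d (p \Po q) (p' \Po q').
Proof.
move=> [r ->] [s ->].
have [t tE] : eqpmod d (p' \Po (q' + d%:P * s)) (p' \Po q').
  elim/poly_ind: p' {r} => [|p' a [t IH]].
    by exists 0; rewrite !comp_poly0 mulr0 addr0.
  exists (t * (q' + d%:P * s) + (p' \Po q') * s).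
  by rewrite !comp_polyD !comp_polyM !comp_polyX !comp_polyC IH; ring.
exists (t + (r \Po (q' + d%:P * s))).
by rewrite comp_polyD comp_polyM comp_polyC tE; ring.
Qed.

Lemma eqpmod_deriv d p q : eqpmod d p q -> eqpmod d p^`() q^`().
Proof. by move=> [r ->]; exists r^`(); rewrite derivD derivM derivC mul0r add0r. Qed.

Lemma eqpmod_horner d p q x y :
  eqpmod d p q -> (d %| x - y)%Z -> (d %| p.[x] - q.[y])%Z.
Proof.
move=> [r ->] dxy; rewrite hornerD hornerM hornerC.
have -> : q.[x] + d * r.[x] - q.[y] = (q.[x] - q.[y]) + d * r.[x] by ring.
by rewrite rpredD ?dvdz_horner_sub ?dvdz_mulr.
Qed.

Lemma modz_eq_dvd (d a b : int) : (d %| a - b)%Z -> (a %% d)%Z = (b %% d)%Z.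
Proof. by move=> dab; apply/eqP; rewrite eqz_mod_dvd. Qed.

Lemma dvdz_modz_sub (d y : int) : (d %| (y %% d)%Z - y)%Z.
Proof. by rewrite -eqz_mod_dvd modz_mod. Qed.

Lemma modz_modz_dvd (d d' z : int) : (d' %| d)%Z -> ((z %% d)%Z %% d')%Z = (z %% d')%Z.
Proof. by move=> d'd; apply/modz_eq_dvd/(dvdz_trans d'd)/dvdz_modz_sub. Qed.

Lemma modz_range (d z : int) : 0 < d -> 0 <= (z %% d)%Z < d.
Proof. by move=> d_gt0; rewrite modz_ge0 ?gt_eqF // ltz_pmod. Qed.

Lemma dvdz_sub_congr (d a b r : int) :
  (d %| a - b)%Z -> (d %| a - r)%Z = (d %| b - r)%Z.
Proof.
move=> dab; have -> : a - r = (a - b) + (b - r) by ring.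
by rewrite rpredDl.
Qed.

Lemma dvdz_double (d x : int) : d != 0 -> (4 * d %| 2 * d * x)%Z = (2 %| x)%Z.
Proof.
move=> d_neq0; have -> : 4 * d = 2 * d * 2 by ring.
by rewrite dvdz_mul2l ?mulf_neq0.
Qed.

Lemma oddzP (x : int) : ~~ (2 %| x)%Z -> exists v, x = 2 * v + 1.
Proof. by move=> x_odd; exists (x %/ 2)%Z; lia. Qed.

Lemma dvdz2_addr1 (x : int) : (2 %| x + 1)%Z = ~~ (2 %| x)%Z.
Proof. lia. Qed.

Lemma dvdz2_subr1 (x : int) : (2 %| x - 1)%Z = ~~ (2 %| x)%Z.
Proof. lia. Qed.

Lemma dvdz4_mul_sub3 (a b : int) :
  (4 %| a - 3)%Z -> (4 %| b - 3)%Z -> (4 %| a * b - 1)%Z.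
Proof.
move=> /dvdzP [u uE] /dvdzP [v vE]; apply/dvdzP; exists (u * v * 4 + 3 * (u + v) + 2).
have aE : a = u * 4 + 3 by rewrite -uE; ring.
have bE : b = v * 4 + 3 by rewrite -vE; ring.
by rewrite aE bE; ring.
Qed.

Lemma eqmod_two_residues (d a b c : int) : 0 < d ->
  0 <= a < 2 * d -> 0 <= b < 2 * d -> 0 <= c < 2 * d ->
  (d %| a - c)%Z -> (d %| b - c)%Z -> a != b -> c = a \/ c = b.
Proof.
move=> d_gt0 ha hb hc /dvdzP [p pE] /dvdzP [q qE] /eqP ab.
have bound2 (r : int) : - (2 * d) < r * d < 2 * d -> -2 < r < 2.
  case/andP=> lo hi; apply/andP; split; last by rewrite -(ltr_pM2r d_gt0).
  by rewrite -(ltr_pM2r d_gt0) mulNr; lia.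
have /andP [p_lo p_hi] : -2 < p < 2 by apply: bound2; rewrite -pE; lia.
have /andP [q_lo q_hi] : -2 < q < 2 by apply: bound2; rewrite -qE; lia.
have : p = -1 \/ p = 0 \/ p = 1 by lia.
have : q = -1 \/ q = 0 \/ q = 1 by lia.
by move=> [|[|]] q_val [|[|]] p_val; rewrite p_val in pE; rewrite q_val in qE; lia.
Qed.

Lemma eqmodn_two_residues (i j k : nat) : (i < 2 * k)%N -> (j < 2 * k)%N ->
  (i = j %[mod k])%N -> i <> j -> (j = i + k)%N \/ (i = j + k)%N.
Proof.
have modn_double (l : nat) : (l < 2 * k)%N -> (l %% k = if (l < k)%N then l else l - k)%N.
  move=> l_lt; case: ltnP => [|k_le]; first exact: modn_small.
  by rewrite -{1}(subnK k_le) modnDr modn_small //; lia.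
by move=> /modn_double -> /modn_double ->; case: ifP; case: ifP; lia.
Qed.

Definition returns_mod (Q : {poly int}) (d w : int) := (d %| Q.[w] - w)%Z.

Lemma returns_modP Q d w : returns_mod Q d w -> exists B, Q.[w] = w + d * B.
Proof. by case/dvdzP=> B BE; exists B; rewrite mulrC -BE; ring. Qed.

Lemma returns_mod_double Q d w B :
  d != 0 -> Q.[w] = w + 2 * d * B -> returns_mod Q (4 * d) w = (2 %| B)%Z.
Proof. by move=> d_neq0 QwE; rewrite /returns_mod QwE addrC addKr dvdz_double. Qed.

Section ReturnsModTwice.
Variables (Q : {poly int}) (d w : int).
Hypotheses (d_neq0 : d != 0) (Q_ret : returns_mod Q (2 * d) w).

Lemma returns_mod_shift s : ~~ (2 %| Q^`().[w])%Z ->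
  returns_mod Q (4 * d) (w + 2 * d * s) = returns_mod Q (4 * d) w.
Proof.
case/oddzP=> v Q'E; have [B QwE] := returns_modP Q_ret.
have [c cE] := horner_taylor Q w (2 * d * s).
rewrite (returns_mod_double _ QwE) // (@returns_mod_double _ _ _
  (B + 2 * (s * v + d * s ^+ 2 * c))) //; last by rewrite cE QwE Q'E; ring.
by rewrite rpredDr // dvdz_mulr.
Qed.

Lemma returns_mod_flip : (4 %| d)%Z -> (4 %| Q^`().[w] - 3)%Z ->
  returns_mod Q (4 * d) (w + d) = ~~ returns_mod Q (4 * d) w.
Proof.
case/dvdzP=> e dE /dvdzP [u Q'E]; have [B QwE] := returns_modP Q_ret.
have Q'w : Q^`().[w] = u * 4 + 3 by rewrite -Q'E; ring.
have [c cE] := horner_taylor Q w d.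
rewrite (returns_mod_double _ QwE) // (@returns_mod_double _ _ _
  (B + 1 + 2 * (u + e * c))) //; last by rewrite cE QwE Q'w dE; ring.
by rewrite rpredDr ?dvdz_mulr // dvdz2_addr1.
Qed.

Lemma returns_mod_comm (P : {poly int}) :
  Q.[P.[w]] = P.[Q.[w]] -> ~~ (2 %| P^`().[w])%Z ->
  returns_mod Q (4 * d) P.[w] = returns_mod Q (4 * d) w.
Proof.
move=> QP /oddzP [v P'E]; have [B QwE] := returns_modP Q_ret.
have [c cE] := horner_taylor P w (2 * d * B).
rewrite (returns_mod_double _ QwE) // (@returns_mod_double _ _ _
  (B + 2 * (B * v + d * B ^+ 2 * c))) //; last by rewrite QP QwE cE P'E; ring.
by rewrite rpredDr // dvdz_mulr.
Qed.

Lemma returns_mod_comp_self : (2 %| d)%Z -> (4 %| Q^`().[w] - 3)%Z ->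
  returns_mod (Q \Po Q) (8 * d) w.
Proof.
case/dvdzP=> e dE /dvdzP [u Q'E]; have [B QwE] := returns_modP Q_ret.
have [c cE] := horner_taylor Q w (2 * d * B).
have Q'w : Q^`().[w] = u * 4 + 3 by rewrite -Q'E; ring.
rewrite /returns_mod horner_comp QwE cE Q'w QwE.
by apply/dvdzP; exists (B * (u + 1) + e * B ^+ 2 * c); rewrite dE; ring.
Qed.

End ReturnsModTwice.

Lemma deriv_comp_oddr (p q : {poly int}) w :
  ~~ (2 %| (p \Po q)^`().[w])%Z -> ~~ (2 %| q^`().[w])%Z.
Proof. by rewrite deriv_comp hornerM; apply: contra; apply: dvdz_mull. Qed.

Lemma pow2S m : pow2 m.+1 = 2 * pow2 m.
Proof. by rewrite /pow2 exprS. Qed.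

Lemma pow2SS m : pow2 m.+2 = 4 * pow2 m.
Proof. by rewrite !pow2S mulrA. Qed.

Lemma pow2_gt0 m : 0 < pow2 m.
Proof. by rewrite /pow2 exprn_gt0. Qed.

Lemma pow2_neq0 m : pow2 m != 0.
Proof. by rewrite gt_eqF // pow2_gt0. Qed.

Lemma dvdz_pow2 m m' : (m <= m')%N -> (pow2 m %| pow2 m')%Z.
Proof. exact: dvdz_exp2l. Qed.

Lemma z2_dvd_sub (x : Z2) m m' : (m <= m')%N -> (pow2 m %| x m' - x m)%Z.
Proof.
elim: m' => [|m' IH]; first by rewrite leqn0 => /eqP ->; rewrite subrr dvdz0.
rewrite leq_eqVlt => /orP [/eqP <-|]; first by rewrite subrr dvdz0.
rewrite ltnS => le_mm'.
have -> : x m'.+1 - x m = (x m'.+1 - x m') + (x m' - x m) by ring.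
rewrite rpredD ?IH //; apply: dvdz_trans (dvdz_pow2 le_mm') _.
by rewrite -eqz_mod_dvd; apply/eqP/z2coh.
Qed.

Definition z2_const (w : int) : Z2 := @MkZ2 (fun _ => w) (fun _ => erefl).

Lemma approx_eqpmod (f : Z2poly) m m' :
  (m <= m')%N -> eqpmod (pow2 m) (approx f m) (approx f m').
Proof.
move=> le_mm'; rewrite /approx; elim: f => [|c f [r rE]] /=; first exact: eqpmod_refl.
have /dvdzP [u uE] := z2_dvd_sub c le_mm'.
exists (r * 'X - u%:P); rewrite !cons_poly_def rE.
have -> : c m = c m' - u * pow2 m by rewrite -uE; ring.
by rewrite polyCB polyCM; ring.
Qed.

Lemma iter_approx_eqpmod f k m m' :
  (m <= m')%N -> eqpmod (pow2 m) (iter_approx f k m) (iter_approx f k m').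
Proof.
move=> le_mm'; elim: k => [|k IH] /=; first exact: eqpmod_refl.
exact: eqpmod_comp (approx_eqpmod f le_mm') IH.
Qed.

Lemma iter_approxD f i j N :
  iter_approx f (i + j) N = iter_approx f i N \Po iter_approx f j N.
Proof.
rewrite /iter_approx iterD; elim: i => [|i IH] /=; first by rewrite comp_polyX.
by rewrite IH comp_polyA.
Qed.

Lemma iter_approx1 f N : iter_approx f 1%N N = approx f N.
Proof. by rewrite /iter_approx /= comp_polyXr. Qed.

Lemma iter_approxC f i j N :
  iter_approx f i N \Po iter_approx f j N = iter_approx f j N \Po iter_approx f i N.
Proof. by rewrite -!iter_approxD addnC. Qed.

Lemma fn_iter f m N i y : (m <= N)%N ->
  iter i (fn f m) (y %% pow2 m)%Z = ((iter_approx f i N).[y] %% pow2 m)%Z.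
Proof.
move=> le_mN; elim: i => [|i IH] /=; first by rewrite hornerX.
rewrite IH /fn horner_comp; apply: modz_eq_dvd.
exact: eqpmod_horner (approx_eqpmod f le_mN) (dvdz_modz_sub _ _).
Qed.

Lemma fn_iter_small f m N i y : (m <= N)%N -> 0 <= y < pow2 m ->
  iter i (fn f m) y = ((iter_approx f i N).[y] %% pow2 m)%Z.
Proof. by move=> le_mN y_small; rewrite -(fn_iter _ _ _ le_mN) modz_small. Qed.

Lemma fn_modz f m z : ((fn f m.+1 z) %% pow2 m)%Z = fn f m (z %% pow2 m)%Z.
Proof.
rewrite -[RHS]/(iter 1%N (fn f m) _) (fn_iter _ _ _ (leqnSn m)) iter_approx1.
by rewrite /fn modz_modz_dvd ?dvdz_pow2.
Qed.

Lemma z2_congE z r m : z2_cong z r m <-> (pow2 m %| z m - r)%Z.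
Proof. by rewrite /z2_cong (rwP eqP) eqz_mod_dvd. Qed.

Lemma a_coef_cong f k N (x : Z2) r : (2 <= N)%N ->
  z2_cong (a_coef f k x) r 2 <-> (4 %| (iter_approx f k N)^`().[x N] - r)%Z.
Proof.
move=> le2N; rewrite z2_congE (@dvdz_sub_congr _ _ ((iter_approx f k N)^`().[x N])) //.
apply: eqpmod_horner; first exact/eqpmod_deriv/iter_approx_eqpmod.
by rewrite -opprB rpredN z2_dvd_sub.
Qed.

Lemma b_coef_parity f m k N (x : Z2) : (m < N)%N ->
  returns_mod (iter_approx f k N) (pow2 m) (x N) ->
  (2 %| b_coef f m k x 1)%Z = returns_mod (iter_approx f k N) (pow2 m.+1) (x N).
Proof.
rewrite /returns_mod /b_coef add1n => lt_mN.
set DN := _ - x N => ret; set Dm := _ - x m.+1.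
have DmE : (pow2 m.+1 %| Dm - DN)%Z.
  have -> : Dm - DN = ((iter_approx f k m.+1).[x m.+1] - (iter_approx f k N).[x N]) -
      (x m.+1 - x N) by rewrite /Dm /DN; ring.
  have x_sub : (pow2 m.+1 %| x m.+1 - x N)%Z by rewrite -opprB rpredN z2_dvd_sub.
  by rewrite rpredB //; apply: eqpmod_horner x_sub; apply: iter_approx_eqpmod.
have /dvdzP [q qE] : (pow2 m %| Dm)%Z.
  have -> : Dm = (Dm - DN) + DN by ring.
  by rewrite rpredD // (dvdz_trans _ DmE) ?dvdz_pow2.
have -> : DN = Dm - (Dm - DN) by ring.
by rewrite (rpredBr _ DmE) qE mulzK ?pow2_neq0 // pow2S dvdz_mul2r ?pow2_neq0.
Qed.

Lemma b_coef_even f m k N (x : Z2) : (m < N)%N ->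
  returns_mod (iter_approx f k N) (pow2 m) (x N) ->
  z2_cong (b_coef f m k x) 0 1 <->
  returns_mod (iter_approx f k N) (pow2 m.+1) (x N).
Proof. by move=> lt_mN ret; rewrite -b_coef_parity // z2_congE subr0. Qed.

Lemma b_coef_odd f m k N (x : Z2) : (m < N)%N ->
  returns_mod (iter_approx f k N) (pow2 m) (x N) ->
  z2_cong (b_coef f m k x) 1 1 <->
  ~~ returns_mod (iter_approx f k N) (pow2 m.+1) (x N).
Proof.
by move=> lt_mN ret; rewrite -b_coef_parity // z2_congE dvdz2_subr1.
Qed.

Definition cycle_seq (h : int -> int) (s : seq int) :=
  forall i, (i < size s)%N -> h (nth 0 s i) = nth 0 s (i.+1 %% size s).

Lemma is_cycle_seq f m s : is_cycle f m s -> cycle_seq (fn f m) s.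
Proof. by case. Qed.

Lemma nth0_traject (h : int -> int) y k i :
  (i < k)%N -> nth 0 (traject h y k) i = iter i h y.
Proof. by move=> lt_ik; rewrite (set_nth_default y) ?size_traject // nth_traject. Qed.

Section CycleSeq.
Variables (h : int -> int) (s : seq int).
Hypothesis s_cycle : cycle_seq h s.

Lemma cycle_seq_iter j i : (i < size s)%N ->
  iter j h (nth 0 s i) = nth 0 s ((i + j) %% size s).
Proof.
move=> lt_is; elim: j => [|j IH] /=; first by rewrite addn0 modn_small.
rewrite IH s_cycle; last by rewrite ltn_mod; case: (size s) lt_is.
by rewrite addnS -addn1 modnDml addn1.
Qed.

Lemma cycle_seq_iter_mem j x : x \in s -> iter j h x \in s.
Proof.
case/(nthP 0)=> i lt_is <-.
by rewrite cycle_seq_iter // mem_nth // ltn_mod; case: (size s) lt_is.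
Qed.

Lemma cycle_seq_period x : x \in s -> iter (size s) h x = x.
Proof. by case/(nthP 0)=> i lt_is <-; rewrite cycle_seq_iter // modnDr modn_small. Qed.

Lemma cycle_seq_reach z w : z \in s -> w \in s -> exists j, w = iter j h z.
Proof.
move=> /(nthP 0) [i lt_is <-] /(nthP 0) [j lt_js <-].
exists (j + (size s - i))%N; rewrite cycle_seq_iter //.
by rewrite addnCA subnKC ?(ltnW lt_is) // modnDr modn_small.
Qed.

Lemma cycle_seqE : (0 < size s)%N -> s = traject h (nth 0 s 0) (size s).
Proof.
move=> s_gt0; apply: (@eq_from_nth _ 0); rewrite ?size_traject // => i lt_is.
by rewrite nth0_traject // cycle_seq_iter // add0n modn_small.
Qed.

End CycleSeq.

Lemma cycle_seq_eq_mem h s s' z :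
  cycle_seq h s -> cycle_seq h s' -> z \in s -> z \in s' -> s =i s'.
Proof.
move=> s_cycle s'_cycle zs zs' w; apply/idP/idP => wt.
  have [j ->] := cycle_seq_reach s_cycle zs wt.
  exact: cycle_seq_iter_mem s'_cycle _ _ zs'.
have [j ->] := cycle_seq_reach s'_cycle zs' wt.
exact: cycle_seq_iter_mem s_cycle _ _ zs.
Qed.

Lemma cycle_seq_traject (h : int -> int) y k :
  (0 < k)%N -> iter k h y = y -> cycle_seq h (traject h y k).
Proof.
move=> k_gt0 hy i; rewrite size_traject => lt_ik.
rewrite !nth0_traject ?ltn_mod // -iterS.
move: lt_ik; rewrite leq_eqVlt => /orP [/eqP ->|lt_i1k]; first by rewrite modnn.
by rewrite modn_small.
Qed.

Lemma map_traject (T U : Type) (g : T -> U) (h1 : T -> T) (h : U -> U) y k :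
  (forall z, g (h1 z) = h (g z)) -> map g (traject h1 y k) = traject h (g y) k.
Proof. by move=> gh; elim: k y => //= k IH y; rewrite IH gh. Qed.

Section WeaklySplittingCycle.
Variables (f : Z2poly) (n : nat) (sigma : seq int).
Hypotheses (n_ge2 : (2 <= n)%N) (sigma_cycle : is_cycle f n sigma)
  (sigma_ws : weakly_splits f n sigma).

(* All polynomials are taken at approximation level n + 3, the highest
   precision the statement ever reads. *)
Local Notation k := (size sigma).
Local Notation Qi i := (iter_approx f i n.+3).
Local Notation Q := (Qi (size sigma)).
Local Notation P := (approx f n.+3).
Local Notation splits w := (returns_mod Q (4 * pow2 n) w).

Fact le_n_n3 : (n <= n.+3)%N.
Proof. by rewrite !leqW. Qed.

Lemma size_sigma_gt0 : (0 < k)%N.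
Proof. by case: sigma_cycle. Qed.

Definition above w := (w %% pow2 n)%Z \in sigma.

Lemma above_congr w w' : (pow2 n %| w - w')%Z -> above w = above w'.
Proof. by move=> ww'; rewrite /above (modz_eq_dvd ww'). Qed.

Lemma above_approx w : above w -> above P.[w].
Proof.
rewrite /above -iter_approx1 -(fn_iter _ _ _ le_n_n3).
exact/cycle_seq_iter_mem/is_cycle_seq.
Qed.

Lemma above_return w : above w ->
  (4 %| Q^`().[w] - 3)%Z /\ returns_mod Q (2 * pow2 n) w.
Proof.
move=> aw; have [a3 b0] := sigma_ws (x := z2_const w) aw.
have ret : returns_mod Q (pow2 n) w.
  rewrite /returns_mod -eqz_mod_dvd; apply/eqP.
  by rewrite -(fn_iter _ _ _ le_n_n3) cycle_seq_period //; apply: is_cycle_seq.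
split; first exact/(a_coef_cong f k (z2_const w) 3 (isT : (2 <= n.+3)%N)).
by rewrite -pow2S; apply/(b_coef_even (x := z2_const w) (ltnW (ltnW (ltnSn n.+2))) ret).
Qed.

Lemma approx_deriv_odd w : above w -> ~~ (2 %| P^`().[w])%Z.
Proof.
case/above_return=> /dvdzP [u Q'E] _.
have : ~~ (2 %| Q^`().[w])%Z by move: Q'E; lia.
have -> : k = (k.-1 + 1)%N by rewrite addn1 prednK // size_sigma_gt0.
rewrite iter_approxD iter_approx1.
exact: deriv_comp_oddr.
Qed.

Lemma splits_approx w : above w -> splits P.[w] = splits w.
Proof.
move=> aw; apply: returns_mod_comm; rewrite ?pow2_neq0 ?approx_deriv_odd //.
  by case: (above_return aw).
have := congr1 (horner^~ w) (iter_approxC f k 1%N n.+3).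
by rewrite !horner_comp !hornerX.
Qed.

Lemma splits_iter i w : above w -> above (Qi i).[w] /\ splits (Qi i).[w] = splits w.
Proof.
move=> aw; elim: i => [|i [ai si]] /=; first by rewrite hornerX.
by rewrite horner_comp above_approx // splits_approx.
Qed.

Lemma splits_modz w : above w ->
  above (w %% pow2 n.+1)%Z /\ splits (w %% pow2 n.+1)%Z = splits w.
Proof.
move=> aw; have a_mod : above (w %% pow2 n.+1)%Z.
  by rewrite (above_congr (dvdz_trans (dvdz_pow2 (leqnSn n)) (dvdz_modz_sub _ _))).
split=> //; have {2}-> : w = (w %% pow2 n.+1)%Z + 2 * pow2 n * (w %/ pow2 n.+1)%Z.
  by rewrite -pow2S {1}(divz_eq w (pow2 n.+1)); ring.
have [/dvdzP [u Q'E] ret] := above_return a_mod.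
by rewrite returns_mod_shift ?pow2_neq0 //; move: Q'E; lia.
Qed.

Lemma splits_double_return w : above w ->
  returns_mod (Qi (k + k)) (pow2 n.+3) w /\ (4 %| (Qi (k + k))^`().[w] - 1)%Z.
Proof.
move=> aw; have [Q'3 ret] := above_return aw.
have [Q'3' _] := above_return (proj1 (splits_iter k aw)).
rewrite iter_approxD; split.
  rewrite (_ : pow2 n.+3 = 8 * pow2 n); last by rewrite !pow2S; ring.
  apply: returns_mod_comp_self; rewrite ?pow2_neq0 //.
  exact: (dvdz_pow2 (m := 1)) (ltnW n_ge2).
by rewrite deriv_comp hornerM horner_comp; apply: dvdz4_mul_sub3.
Qed.

Definition lift_base y := (0 <= y < pow2 n.+1) && ((y %% pow2 n)%Z == nth 0 sigma 0).

Local Notation lift y := (traject (fn f n.+1) y k).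
Local Notation double_lift y := (traject (fn f n.+2) y (k + k)).

Lemma lift_base_above y : lift_base y -> above y.
Proof. by case/andP=> _ /eqP yE; rewrite /above yE mem_nth ?size_sigma_gt0. Qed.

Lemma iter_fn_lift_base y i : lift_base y ->
  iter i (fn f n.+1) y = ((Qi i).[y] %% pow2 n.+1)%Z.
Proof.
by case/andP=> y_small _; rewrite (fn_iter_small _ _ (leqW (leqnSn n.+1)) y_small).
Qed.

Lemma map_modz_lift y : lift_base y -> map (modz^~ (pow2 n)) (lift y) = sigma.
Proof.
case/andP=> _ /eqP yE; rewrite (map_traject _ _ (fn_modz f n)) yE.
by rewrite -cycle_seqE ?size_sigma_gt0 //; apply: is_cycle_seq.
Qed.

Lemma lift_cycle y : lift_base y -> is_cycle f n.+1 (lift y).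
Proof.
move=> yb; split.
- by rewrite size_traject size_sigma_gt0.
- apply: (map_uniq (f := modz^~ (pow2 n))).
  by rewrite map_modz_lift //; case: sigma_cycle.
- apply/allP=> z /trajectP [i _ ->].
  by rewrite iter_fn_lift_base // modz_range // pow2_gt0.
- apply: cycle_seq_traject; first exact: size_sigma_gt0.
  have /andP [y_small _] := yb; rewrite iter_fn_lift_base // -[RHS](modz_small y_small).
  by apply: modz_eq_dvd; rewrite pow2S; case: (above_return (lift_base_above yb)).
Qed.

Lemma iter_mem_lift y i : lift_base y -> iter i (fn f n.+1) y \in lift y.
Proof.
move=> yb; have [_ _ _ lift_cyc] := lift_cycle yb.
have y_lift : y \in lift y by apply/trajectP; exists 0%N; rewrite ?size_sigma_gt0.
exact: cycle_seq_iter_mem lift_cyc _ _ y_lift.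
Qed.

Lemma lift_is_lift y : lift_base y -> is_lift f n sigma (lift y).
Proof.
move=> yb; split; first exact: lift_cycle.
by apply/allP=> z zl; rewrite -(map_modz_lift yb); apply: (map_f (modz^~ (pow2 n))).
Qed.

Lemma splits_lift y z : lift_base y -> (z %% pow2 n.+1)%Z \in lift y ->
  above z /\ splits z = splits y.
Proof.
move=> yb zl; have az : above z.
  rewrite /above -(modz_modz_dvd z (dvdz_pow2 (leqnSn n))) -(map_modz_lift yb).
  exact: (map_f (modz^~ (pow2 n))).
split=> //; have [_ <-] := splits_modz az.
move/trajectP: zl => [i _]; rewrite iter_fn_lift_base // => ->.
have [ai <-] := splits_iter i (lift_base_above yb).
by case: (splits_modz ai).
Qed.

Lemma splits_mem_lift y z : lift_base y -> z \in lift y ->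
  splits z = splits y /\ 0 <= z < pow2 n.+1.
Proof.
move=> yb zl; have [_ _ /allP /(_ z zl) z_range _] := lift_cycle yb.
have zl' : (z %% pow2 n.+1)%Z \in lift y by rewrite modz_small.
by have [_ ->] := splits_lift yb zl'.
Qed.

Lemma exists_lift_bases : exists y1 y2,
  [/\ lift_base y1, lift_base y2, splits y1 & ~~ splits y2].
Proof.
set x1 := nth 0 sigma 0.
have /andP [x1_ge0 x1_lt] : 0 <= x1 < pow2 n.
  by case: sigma_cycle => _ _ /allP -> //; rewrite mem_nth ?size_sigma_gt0.
have D_gt0 := pow2_gt0 n.
have x1_mod : (x1 %% pow2 n)%Z = x1 by rewrite modz_small // x1_ge0.
have b0 : lift_base x1 by rewrite /lift_base x1_mod eqxx andbT pow2S; lia.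
have b1 : lift_base (x1 + pow2 n).
  by rewrite /lift_base modzDr x1_mod eqxx andbT pow2S; lia.
have [Q'3 ret] := above_return (lift_base_above b0).
have flip : splits (x1 + pow2 n) = ~~ splits x1.
  by apply: returns_mod_flip Q'3; rewrite ?pow2_neq0 // (_ : 4 = pow2 2) // dvdz_pow2.
by case sx1 : (splits x1); [exists x1, (x1 + pow2 n) | exists (x1 + pow2 n), x1];
  rewrite flip sx1.
Qed.

Section TwoLifts.
Variables (y1 y2 : int).
Hypotheses (y1_base : lift_base y1) (y2_base : lift_base y2)
  (y1_splits : splits y1) (y2_grows : ~~ splits y2).

Lemma lifts_neq : ~ (lift y1 =i lift y2).
Proof.
move=> eq12; have y1l : y1 \in lift y2 by rewrite -eq12 (iter_mem_lift 0%N y1_base).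
have [s1 _] := splits_mem_lift y2_base y1l.
by move: y2_grows; rewrite -s1 y1_splits.
Qed.

Lemma lifts_cover tau : is_lift f n sigma tau -> tau =i lift y1 \/ tau =i lift y2.
Proof.
move=> [tau_cycle /allP tau_above].
have tau_gt0 : (0 < size tau)%N by case: tau_cycle.
set z := nth 0 tau 0; have ztau : z \in tau by apply: mem_nth.
have z_range : 0 <= z < 2 * pow2 n.
  by rewrite -pow2S; case: tau_cycle => _ _ /allP /(_ _ ztau).
have /(nthP 0) [j lt_jk zj] := tau_above z ztau.
have modz_lift y : lift_base y -> (pow2 n %| iter j (fn f n.+1) y - z)%Z.
  move=> yb; rewrite -eqz_mod_dvd -zj -(map_modz_lift yb) (nth_map 0) ?size_traject //.
  by rewrite nth0_traject.
have [s1 r1] := splits_mem_lift y1_base (iter_mem_lift j y1_base).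
have [s2 r2] := splits_mem_lift y2_base (iter_mem_lift j y2_base).
rewrite pow2S in r1 r2.
have neq : iter j (fn f n.+1) y1 != iter j (fn f n.+1) y2.
  by apply/eqP=> eq12; move: y2_grows; rewrite -s2 -eq12 s1 y1_splits.
have same_cycle y : lift_base y -> z = iter j (fn f n.+1) y -> tau =i lift y.
  move=> yb zE; apply: (cycle_seq_eq_mem (is_cycle_seq tau_cycle)
    (is_cycle_seq (lift_cycle yb)) ztau).
  by rewrite zE iter_mem_lift.
have := eqmod_two_residues (pow2_gt0 n) r1 r2 z_range (modz_lift _ y1_base)
  (modz_lift _ y2_base) neq.
by case=> zE; [left; apply: same_cycle y1_base zE | right; apply: same_cycle y2_base zE].
Qed.

Lemma lift_point_above y (x : Z2) : lift_base y ->
  (x n.+1 %% pow2 n.+1)%Z \in lift y -> above (x n.+3) /\ splits (x n.+3) = splits y.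
Proof.
move=> yb xl; apply: (splits_lift yb).
by rewrite (modz_eq_dvd (z2_dvd_sub x (leqW (leqnSn n.+1)))).
Qed.

Lemma lift_weakly_splits : weakly_splits f n.+1 (lift y1).
Proof.
move=> x xl; rewrite size_traject; have [ax sx] := lift_point_above y1_base xl.
have [Q'3 ret] := above_return ax.
split; first exact/(a_coef_cong f k x 3 (isT : (2 <= n.+3)%N)).
have ret' : returns_mod Q (pow2 n.+1) (x n.+3) by rewrite pow2S.
by apply/(b_coef_even (ltnW (ltnSn n.+2)) ret'); rewrite pow2SS sx.
Qed.

Lemma lift_weakly_grows : weakly_grows f n.+1 (lift y2).
Proof.
move=> x xl; rewrite size_traject; have [ax sx] := lift_point_above y2_base xl.
have [Q'3 ret] := above_return ax.
split; first exact/(a_coef_cong f k x 3 (isT : (2 <= n.+3)%N)).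
have ret' : returns_mod Q (pow2 n.+1) (x n.+3) by rewrite pow2S.
by apply/(b_coef_odd (ltnW (ltnSn n.+2)) ret'); rewrite pow2SS sx.
Qed.

End TwoLifts.

Section GrowingLift.
Variable y : int.
Hypotheses (y_base : lift_base y) (y_grows : ~~ splits y).

Lemma lift_base_small2 : 0 <= y < pow2 n.+2.
Proof.
have /andP [/andP [y_ge0 y_lt] _] := y_base.
by rewrite y_ge0 /=; move: y_lt; rewrite !pow2S; have := pow2_gt0 n; lia.
Qed.

Lemma iter_fn2_lift_base i : iter i (fn f n.+2) y = ((Qi i).[y] %% pow2 n.+2)%Z.
Proof. exact: fn_iter_small _ _ (leqnSn n.+2) lift_base_small2. Qed.

Lemma iter_fn2_modz i :
  (iter i (fn f n.+2) y %% pow2 n.+1)%Z = iter i (fn f n.+1) y.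
Proof. by rewrite iter_fn2_lift_base modz_modz_dvd ?dvdz_pow2 // iter_fn_lift_base. Qed.

Lemma iter_fn2_period : iter (k + k) (fn f n.+2) y = y.
Proof.
rewrite iter_fn2_lift_base -[RHS](modz_small lift_base_small2); apply: modz_eq_dvd.
apply: dvdz_trans (proj1 (splits_double_return (lift_base_above y_base))).
exact: dvdz_pow2.
Qed.

Lemma iter_fn2_half_neq i : iter (k + i) (fn f n.+2) y != iter i (fn f n.+2) y.
Proof.
rewrite !iter_fn2_lift_base iter_approxD horner_comp; apply/eqP=> eq.
have [_ si] := splits_iter i (lift_base_above y_base).
by move: y_grows; rewrite -si /returns_mod -pow2SS -eqz_mod_dvd eq eqxx.
Qed.

Lemma double_lift_uniq : uniq (double_lift y).
Proof.
have lift_nth j : iter j (fn f n.+1) y = nth 0 (lift y) (j %% k).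
  have := cycle_seq_iter (is_cycle_seq (lift_cycle y_base)) j (i := 0%N).
  by rewrite size_traject nth0_traject ?size_sigma_gt0 // => ->.
apply/(uniqP 0) => i j; rewrite !inE size_traject => lt_i lt_j.
rewrite !nth0_traject // => eq_ij.
have eq_mod : (i = j %[mod k])%N.
  have := congr1 (modz^~ (pow2 n.+1)) eq_ij; rewrite /= !iter_fn2_modz !lift_nth.
  have [_ /(uniqP 0) lift_uniq _ _] := lift_cycle y_base.
  by apply: lift_uniq; rewrite inE size_traject ltn_mod size_sigma_gt0.
case: (eqVneq i j) => // /eqP neq_ij.
have lt2 l : (l < k + k)%N -> (l < 2 * k)%N by rewrite mul2n -addnn.
move: eq_ij.
have [-> eq_ik | -> eq_jk] := eqmodn_two_residues (lt2 _ lt_i) (lt2 _ lt_j) eq_mod neq_ij.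
  by move: (iter_fn2_half_neq i); rewrite addnC -eq_ik eqxx.
by move: (iter_fn2_half_neq j); rewrite addnC eq_jk eqxx.
Qed.

Lemma double_lift_cycle : is_cycle f n.+2 (double_lift y).
Proof.
split.
- by rewrite size_traject addn_gt0 size_sigma_gt0.
- exact: double_lift_uniq.
- apply/allP=> z /trajectP [i _ ->].
  by rewrite iter_fn2_lift_base modz_range // pow2_gt0.
- apply: cycle_seq_traject iter_fn2_period.
  by rewrite addn_gt0 size_sigma_gt0.
Qed.

Lemma double_lift_is_lift : is_lift f n.+1 (lift y) (double_lift y).
Proof.
split; first exact: double_lift_cycle.
by apply/allP=> z /trajectP [i _ ->]; rewrite iter_fn2_modz iter_mem_lift.
Qed.

Lemma double_lift_unique rho : is_lift f n.+1 (lift y) rho -> rho =i double_lift y.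
Proof.
move=> [rho_cycle /allP rho_above].
have rho_gt0 : (0 < size rho)%N by case: rho_cycle.
set z := nth 0 rho 0; have zrho : z \in rho by apply: mem_nth.
have z_range : 0 <= z < 2 * pow2 n.+1.
  by rewrite -pow2S; case: rho_cycle => _ _ /allP /(_ _ zrho).
have /trajectP [j lt_jk zj] := rho_above z zrho.
have range i : 0 <= iter i (fn f n.+2) y < 2 * pow2 n.+1.
  by rewrite -pow2S iter_fn2_lift_base modz_range ?pow2_gt0.
have dvd_z i : iter i (fn f n.+1) y = iter j (fn f n.+1) y ->
    (pow2 n.+1 %| iter i (fn f n.+2) y - z)%Z.
  by move=> eq_ij; rewrite -eqz_mod_dvd; apply/eqP; rewrite iter_fn2_modz eq_ij zj.
have lift_period : iter (j + k) (fn f n.+1) y = iter j (fn f n.+1) y.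
  have := cycle_seq_period (is_cycle_seq (lift_cycle y_base)) (iter_mem_lift 0%N y_base).
  by rewrite size_traject iterD => ->.
have same_cycle i : (i < k + k)%N -> z = iter i (fn f n.+2) y -> rho =i double_lift y.
  move=> lt_i zE; apply: (cycle_seq_eq_mem (is_cycle_seq rho_cycle)
    (is_cycle_seq double_lift_cycle) zrho).
  by rewrite zE; apply/trajectP; exists i.
have := eqmod_two_residues (pow2_gt0 n.+1) (range j) (range (j + k)%N) z_range
  (dvd_z _ erefl) (dvd_z _ lift_period).
rewrite eq_sym addnC iter_fn2_half_neq => /(_ isT) [] zE.
  by apply: (same_cycle j) zE; lia.
by apply: (same_cycle (k + j)%N) zE; lia.
Qed.

Lemma double_lift_strongly_splits : strongly_splits f n.+2 (double_lift y).
Proof.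
move=> x xd; rewrite size_traject.
have ax : above (x n.+3).
  have : ((x n.+3 %% pow2 n.+2)%Z %% pow2 n.+1)%Z \in lift y.
    rewrite (modz_eq_dvd (z2_dvd_sub x (leqnSn n.+2))).
    by move/allP: double_lift_is_lift.2 => /(_ _ xd).
  by rewrite modz_modz_dvd ?dvdz_pow2 // => /(splits_lift y_base) [].
have [ret8 deriv1] := splits_double_return ax.
split; first exact/(a_coef_cong f (k + k) x 1 (isT : (2 <= n.+3)%N)).
have ret4 : returns_mod (Qi (k + k)) (pow2 n.+2) (x n.+3).
  exact: dvdz_trans (dvdz_pow2 (leqnSn n.+2)) ret8.
exact/(b_coef_even (ltnSn n.+2) ret4).
Qed.

End GrowingLift.

End WeaklySplittingCycle.

Theorem proposition3p3 (f : Z2poly) (n : nat) (sigma : seq int) :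
  (2 <= n)%N -> is_cycle f n sigma -> weakly_splits f n sigma ->
  exists tau1 tau2 : seq int,
    [/\ is_lift f n sigma tau1, is_lift f n sigma tau2, ~ (tau1 =i tau2)
      & (forall tau, is_lift f n sigma tau -> tau =i tau1 \/ tau =i tau2)] /\
    [/\ weakly_splits f n.+1 tau1, weakly_grows f n.+1 tau2 &
        exists rho : seq int,
          [/\ is_lift f n.+1 tau2 rho,
              (forall rho', is_lift f n.+1 tau2 rho' -> rho' =i rho) &
              strongly_splits f n.+2 rho]].
Proof.
move=> n_ge2 sigma_cycle sigma_ws.
have [y1 [y2 [b1 b2 s1 s2]]] := exists_lift_bases n_ge2 sigma_cycle sigma_ws.
exists (traject (fn f n.+1) y1 (size sigma)), (traject (fn f n.+1) y2 (size sigma)).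
split; split.
- exact: lift_is_lift b1.
- exact: lift_is_lift b2.
- exact: lifts_neq b1 b2 s1 s2.
- exact: lifts_cover b1 b2 s1 s2.
- exact: lift_weakly_splits b1 s1.
- exact: lift_weakly_grows b2 s2.
exists (traject (fn f n.+2) y2 (size sigma + size sigma)); split.
- exact: double_lift_is_lift b2 s2.
- exact: double_lift_unique b2 s2.
- exact: double_lift_strongly_splits b2 s2.
Qed.
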